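(* Let $\eta\in(0,1)$, let $\pi$ be a probability vector on $[K]$ with positive entries, let $\ell\in[-1,1]^K$ be fixed, and let $A\sim\pi$. Define $\tilde\ell_i=\ell_i\mathbb{I}(A=i)$, $\lambda_i=\frac{\pi_i\pi_A\ell_A}{\sum_{j}\pi_j^2}$ and $\pi'_i=\pi_i\big(1-\eta(\tilde\ell_i-\lambda_i)\big)$. Then for every probability vector $u$ on $[K]$ with positive entries, $$\langle\pi-u,\ell\rangle+\mathbb{E}\!\left[\eta^{-1}D_{LB}(u,\pi')\right]-\eta^{-1}D_{LB}(u,\pi)\le\frac{2\eta}{1-\eta}.$$
   Context: $D_{LB}$ is the Bregman divergence of the log-barrier $F(x)=-\sum_{i=1}^K\log x_i$: for $x,y$ with positive entries, $D_{LB}(y,x)=\sum_{i=1}^K\left(\frac{y_i}{x_i}-1-\log\frac{y_i}{x_i}\right)$. The expectation is over $A\sim\pi$. (Under these hypotheses $\pi'$ has positive entries and sums to one.) *)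

From HB Require Import structures.
From mathcomp Require Import all_boot all_order all_algebra.
From mathcomp Require Import reals exp.
Set Implicit Arguments. Unset Strict Implicit. Unset Printing Implicit Defensive.
Import Order.TTheory GRing.Theory Num.Theory.
Local Open Scope ring_scope.

(* Bregman divergence of the log-barrier F(x) = - sum_i log x_i:
   D_LB(y,x) = sum_i (y_i/x_i - 1 - log(y_i/x_i)). *)
Definition DLB (R : realType) (K : nat) (y x : 'I_K -> R) : R :=
  \sum_(i < K) (y i / x i - 1 - ln (y i / x i)).

Definition lam (R : realType) (K : nat) (pi l : 'I_K -> R) (a i : 'I_K) : R :=
  pi i * pi a * l a / \sum_(j < K) pi j ^+ 2.

Definition ltilde (R : realType) (K : nat) (l : 'I_K -> R) (a i : 'I_K) : R :=
  if a == i then l i else 0.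

Definition pi' (R : realType) (K : nat) (eta : R) (pi l : 'I_K -> R) (a i : 'I_K) : R :=
  pi i * (1 - eta * (ltilde l a i - lam pi l a i)).

(* Write [g_a i] for the shifted estimate [ltilde_i - lambda_i] when [A = a], so that
   [pi'_i = pi_i (1 - eta g_a i)].  Each summand [phi (u_i / x_i)], [phi z = z - 1 - ln z],
   of the log-barrier divergence changes under the update by at most
   [eta ((u_i/pi_i - 1) g + (u_i/pi_i) (eta/(1-eta)) g^2)], using [ln (1 - t) <= -t] and
   [1/(1-t) - 1 - t = t^2/(1-t)].  Averaging over [A ~ pi], the first-order terms give
   [<u - pi, l - c>] for a constant [c], i.e. exactly [<u - pi, l>] since [u] and [pi]
   both sum to one; this cancels the linear regret term.  The second moment
   [E (g_A i)^2] is at most [2 pi_i], because [pi_i pi_a <= sum_j pi_j^2], so the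
   quadratic terms add up to at most [2 eta/(1-eta)]. *)
From HB Require Import structures.
From mathcomp Require Import all_boot all_order all_algebra.
From mathcomp Require Import reals exp.
From mathcomp Require Import ring lra.
Import Order.TTheory GRing.Theory Num.Theory.
Set Implicit Arguments. Unset Strict Implicit. Unset Printing Implicit Defensive.
Local Open Scope ring_scope.

Definition lb_phi (R : realType) (z : R) : R := z - 1 - ln z.

Lemma DLBE (R : realType) (K : nat) (y x : 'I_K -> R) :
  DLB y x = \sum_(i < K) lb_phi (y i / x i).
Proof. by []. Qed.

Lemma lb_phi_rescale_le (R : realType) (eta q g : R) :
  0 < eta -> eta < 1 -> 0 < q -> g <= 1 ->
  eta^-1 * (lb_phi (q / (1 - eta * g)) - lb_phi q)
    <= (q - 1) * g + q * (eta / (1 - eta)) * g ^+ 2.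
Proof.
move=> eta_gt0 eta_lt1 q_gt0 g_le1.
have y_ge : 1 - eta <= 1 - eta * g by nra.
have y_gt0 : 0 < 1 - eta * g by lra.
set y := 1 - eta * g in y_ge y_gt0 *.
rewrite /lb_phi ln_div ?posrE //.
have ln_y_le : ln y <= - (eta * g) by rewrite /y le_ln1Dx //; nra.
have inv_y_le : 1 / y - 1 - eta * g <= eta ^+ 2 * g ^+ 2 / (1 - eta).
  have -> : 1 / y - 1 - eta * g = (eta * g) ^+ 2 / y.
    by rewrite /y; field; rewrite -/y gt_eqF.
  rewrite exprMn; apply: ler_wpM2l; first by rewrite mulr_ge0 // sqr_ge0.
  by rewrite lef_pV2 ?posrE //; lra.
have q_inv_y_le : q * (1 / y - 1 - eta * g) <= q * (eta ^+ 2 * g ^+ 2 / (1 - eta)).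
  by rewrite ler_pM2l.
rewrite -(ler_pM2l eta_gt0) [eta * (eta^-1 * _)]mulrA mulfV ?gt_eqF // mul1r.
have -> : q / y = q * (1 / y) by rewrite mul1r.
have -> : eta * ((q - 1) * g + q * (eta / (1 - eta)) * g ^+ 2) =
    q * eta * g - eta * g + q * (eta ^+ 2 * g ^+ 2 / (1 - eta)).
  by field; rewrite gt_eqF // subr_gt0.
lra.
Qed.

Section ShiftedEstimate.

Variables (R : realType) (K : nat) (pi l : 'I_K -> R).
Hypothesis pi_gt0 : forall i, 0 < pi i.
Hypothesis l_bound : forall i, -1 <= l i <= 1.

Definition shifted_loss (a i : 'I_K) : R := ltilde l a i - lam pi l a i.

Lemma pi'E (eta : R) a i : pi' eta pi l a i = pi i * (1 - eta * shifted_loss a i).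
Proof. by []. Qed.

Lemma mul_le_sum_sqr i a : pi i * pi a <= \sum_(j < K) pi j ^+ 2.
Proof.
have sum_ge0 (P : pred 'I_K) : 0 <= \sum_(j < K | P j) pi j ^+ 2.
  by apply: sumr_ge0 => j _; exact: sqr_ge0.
have [<-|a_neq_i] := eqVneq a i; first by rewrite (bigD1 a) //= -expr2 lerDl.
rewrite (bigD1 i) //= (bigD1 a) //=.
have := sum_ge0 (fun j => (j != i) && (j != a)).
have := pi_gt0 i; have := pi_gt0 a; nra.
Qed.

Lemma sum_sqr_gt0 (i : 'I_K) : 0 < \sum_(j < K) pi j ^+ 2.
Proof. have := mul_le_sum_sqr i i; have := mulr_gt0 (pi_gt0 i) (pi_gt0 i); lra. Qed.

Lemma lam_weight_bound a i : 0 <= pi i * pi a / \sum_(j < K) pi j ^+ 2 <= 1.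
Proof.
have S_gt0 := sum_sqr_gt0 i.
apply/andP; split; first by rewrite divr_ge0 // ltW // mulr_gt0.
by rewrite ler_pdivrMr // mul1r mul_le_sum_sqr.
Qed.

Lemma lamE a i : lam pi l a i = pi i * pi a / (\sum_(j < K) pi j ^+ 2) * l a.
Proof. by rewrite /lam mulrAC. Qed.

Lemma shifted_loss_bound a i : -1 <= shifted_loss a i <= 1.
Proof.
rewrite /shifted_loss lamE /ltilde.
have /andP[w_ge0 w_le1] := lam_weight_bound a i.
set w := _ / _ in w_ge0 w_le1 *.
have /andP[la_ge la_le] := l_bound a.
by case: eqP => [<-|_]; apply/andP; split; nra.
Qed.

Lemma mean_shifted_loss i :
  \sum_(a < K) pi a * shifted_loss a i =
  pi i * (l i - (\sum_(a < K) pi a ^+ 2 * l a) / \sum_(j < K) pi j ^+ 2).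
Proof.
under eq_bigr do rewrite mulrBr.
rewrite sumrB mulrBr; congr (_ - _).
  rewrite (bigD1 i) //= /ltilde eqxx big1 ?addr0 // => a a_neq_i.
  by rewrite (negbTE a_neq_i) mulr0.
rewrite /lam mulrA big_distrr /= big_distrl /=; apply: eq_bigr => a _.
by rewrite expr2; ring.
Qed.

(* The diagonal term [a = i] contributes at most [pi_i]; the others at most
   [sum_a pi_i pi_a^2 / sum_j pi_j^2 <= pi_i]. *)
Lemma second_moment_shifted_loss_le i :
  \sum_(a < K) pi a * shifted_loss a i ^+ 2 <= 2 * pi i.
Proof.
have S_gt0 := sum_sqr_gt0 i.
set S := \sum_(j < K) pi j ^+ 2 in S_gt0.
have weights_sum : \sum_(a < K) pi i * pi a / S * pi a = pi i.
  transitivity (pi i * S / S); last by rewrite mulfK ?gt_eqF.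
  rewrite /S big_distrr /= big_distrl /=; apply: eq_bigr => a _.
  by rewrite expr2; ring.
rewrite (bigD1 i) //=.
have diag_le : pi i * shifted_loss i i ^+ 2 <= pi i.
  have /andP[g_ge g_le] := shifted_loss_bound i i.
  by rewrite -{2}(mulr1 (pi i)) ler_pM2l // expr2; nra.
have off_diag_le : \sum_(a < K | a != i) pi a * shifted_loss a i ^+ 2
    <= \sum_(a < K | a != i) pi i * pi a / S * pi a.
  apply: ler_sum => a a_neq_i.
  rewrite /shifted_loss lamE /ltilde (negbTE a_neq_i) -/S sub0r sqrrN exprMn.
  have /andP[w_ge0 w_le1] := lam_weight_bound a i; rewrite -/S in w_ge0 w_le1.
  set w := _ / S in w_ge0 w_le1 *.
  have /andP[la_ge la_le] := l_bound a.
  rewrite [w * pi a]mulrC ler_pM2l //.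
  have : w ^+ 2 * l a ^+ 2 <= w ^+ 2 by rewrite -{2}(mulr1 (w ^+ 2)) ler_wpM2l ?sqr_ge0 // expr2; nra.
  by rewrite expr2; nra.
have off_diag_weights : \sum_(a < K | a != i) pi i * pi a / S * pi a <= pi i.
  rewrite -{2}weights_sum (bigD1 i (P := predT)) //= lerDr.
  by rewrite !mulr_ge0 ?invr_ge0 // ltW.
lra.
Qed.

Lemma expected_DLB_increment_le (eta : R) (u : 'I_K -> R) :
  0 < eta -> eta < 1 -> (forall i, 0 < u i) ->
  \sum_(a < K) pi a * (eta^-1 * (DLB u (pi' eta pi l a) - DLB u pi))
  <= \sum_(i < K) ((u i / pi i - 1) * \sum_(a < K) pi a * shifted_loss a i
       + u i / pi i * (eta / (1 - eta)) * \sum_(a < K) pi a * shifted_loss a i ^+ 2).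
Proof.
move=> eta_gt0 eta_lt1 u_gt0.
set k := eta / (1 - eta).
have -> : \sum_(i < K) ((u i / pi i - 1) * \sum_(a < K) pi a * shifted_loss a i
       + u i / pi i * k * \sum_(a < K) pi a * shifted_loss a i ^+ 2)
    = \sum_(a < K) pi a * \sum_(i < K)
       ((u i / pi i - 1) * shifted_loss a i + u i / pi i * k * shifted_loss a i ^+ 2).
  under [RHS]eq_bigr do rewrite mulr_sumr.
  rewrite [RHS]exchange_big /=; apply: eq_bigr => i _.
  by rewrite !mulr_sumr -big_split /=; apply: eq_bigr => a _; ring.
apply: ler_sum => a _; rewrite ler_pM2l // !DLBE -sumrB mulr_sumr.
apply: ler_sum => i _; rewrite pi'E invfM mulrA.
have /andP[_ g_le1] := shifted_loss_bound a i.
by apply: lb_phi_rescale_le; rewrite ?divr_gt0.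
Qed.

Lemma moment_terms_le (k : R) (u : 'I_K -> R) :
  0 <= k -> (forall i, 0 < u i) ->
  \sum_(i < K) u i = 1 -> \sum_(i < K) pi i = 1 ->
  \sum_(i < K) ((u i / pi i - 1) * \sum_(a < K) pi a * shifted_loss a i
       + u i / pi i * k * \sum_(a < K) pi a * shifted_loss a i ^+ 2)
  <= \sum_(i < K) (u i - pi i) * l i + 2 * k.
Proof.
move=> k_ge0 u_gt0 u_sum1 pi_sum1.
set c := (\sum_(a < K) pi a ^+ 2 * l a) / \sum_(j < K) pi j ^+ 2.
apply: (@le_trans _ _ (\sum_(i < K) ((u i - pi i) * (l i - c) + u i * (2 * k)))).
  apply: ler_sum => i _; rewrite mean_shifted_loss -/c.
  have pi_neq0 : pi i != 0 by rewrite gt_eqF.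
  have -> : (u i - pi i) * (l i - c) + u i * (2 * k) =
      (u i / pi i - 1) * (pi i * (l i - c)) + u i / pi i * k * (2 * pi i).
    by field.
  rewrite lerD2l ler_wpM2l ?second_moment_shifted_loss_le //.
  by rewrite mulr_ge0 // divr_ge0 // ltW.
rewrite big_split /= -mulr_suml u_sum1 mul1r lerD2r.
under eq_bigr do rewrite mulrBr.
by rewrite sumrB -mulr_suml sumrB u_sum1 pi_sum1 subrr mul0r subr0.
Qed.

End ShiftedEstimate.

Theorem mainTheorem4 (R : realType) (K : nat) (eta : R) (pi l u : 'I_K -> R) :
  0 < eta -> eta < 1 ->
  (forall i, 0 < pi i) -> \sum_(i < K) pi i = 1 ->
  (forall i, -1 <= l i <= 1) ->
  (forall i, 0 < u i) -> \sum_(i < K) u i = 1 ->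
  \sum_(i < K) (pi i - u i) * l i
    + \sum_(a < K) pi a * (eta^-1 * DLB u (pi' eta pi l a))
    - eta^-1 * DLB u pi
  <= 2 * eta / (1 - eta).
Proof.
move=> eta_gt0 eta_lt1 pi_gt0 pi_sum1 l_bound u_gt0 u_sum1.
have k_ge0 : 0 <= eta / (1 - eta) by rewrite divr_ge0 ?ltW // subr_gt0.
have expected_increment :
    \sum_(a < K) pi a * (eta^-1 * DLB u (pi' eta pi l a)) - eta^-1 * DLB u pi
    = \sum_(a < K) pi a * (eta^-1 * (DLB u (pi' eta pi l a) - DLB u pi)).
  rewrite -[X in _ - X]mul1r -pi_sum1 mulr_suml -sumrB.
  by apply: eq_bigr => a _; rewrite -!mulrBr.
have increment_le := le_trans
  (expected_DLB_increment_le pi_gt0 l_bound eta_gt0 eta_lt1 u_gt0)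
  (moment_terms_le pi_gt0 l_bound k_ge0 u_gt0 u_sum1 pi_sum1).
have linear_cancel : \sum_(i < K) (u i - pi i) * l i = - \sum_(i < K) (pi i - u i) * l i.
  by rewrite -sumrN; apply: eq_bigr => i _; rewrite -mulNr opprB.
rewrite linear_cancel in increment_le.
rewrite -addrA expected_increment -mulrA; lra.
Qed.
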